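(* Consider the algorithm described in the context, and suppose it does not terminate finitely. Then for all $k\in\mathbb{N}$, $$g_k^Ts_k+\frac{\bar\sigma_u\|s_k\|_2^2}{\alpha_k}+r(x_k+s_k)-r_k\le(\kappa_{\nabla f}+\kappa_{\partial r})\|v_k\|_2+\frac{\bar\sigma_u\|v_k\|_2^2}{\alpha_k}.$$
   Context: Problem: $\min_{x\in\mathbb{R}^n} f(x)+r(x)$ subject to $c(x)=0$, where $f:\mathbb{R}^n\to\mathbb{R}$ and $c:\mathbb{R}^n\to\mathbb{R}^m$ ($m\le n$) are continuously differentiable and $r:\mathbb{R}^n\to\mathbb{R}_{\ge 0}$ is convex. Write $g(x)=\nabla f(x)$, $J(x)=\nabla c(x)^T$, and $f_k=f(x_k)$, $g_k=g(x_k)$, $c_k=c(x_k)$, $J_k=J(x_k)$, $r_k=r(x_k)$. All norms are Euclidean. Merit function: $\Phi_\tau(x)=\tau(f(x)+r(x))+\|c(x)\|_2$. Algorithm: inputs $x_0$, $\alpha_0>0$, $\tau_{-1}>0$; constants $\kappa_v>0$, $\sigma_c,\epsilon_\tau,\xi,\eta\in(0,1)$, $\sigma_u\in(0,1/2]$, $\bar\sigma_u:=\sigma_u+\tfrac12$. For $k=0,1,\dots$: 1. If $J_k^Tc_k\ne0$, compute $v_k$ with $v_k\in\mathrm{Range}(J_k^T)$, $\|v_k\|_2\le\kappa_v\alpha_k\|J_k^Tc_k\|_2$, $\|c_k+J_kv_k\|_2\le\|c_k+J_kv_k^c\|_2$, where $v_k^c=-\beta_k^cJ_k^Tc_k$ with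 $\beta_k^c$ minimizing $\tfrac12\|c_k-\beta J_kJ_k^Tc_k\|_2^2$ over $0\le\beta\le\kappa_v\alpha_k$. Otherwise set $v_k=0$, and if $c_k\ne0$ terminate. 2. Let $u_k$ be the unique minimizer of $g_k^Tu+\tfrac1{2\alpha_k}\|u\|_2^2+r(x_k+v_k+u)$ subject to $J_ku=0$; set $s_k=v_k+u_k$. If $s_k=0$, terminate. 3. Let $D_k:=g_k^Ts_k+\bar\sigma_u\|s_k\|_2^2/\alpha_k+r(x_k+s_k)-r_k$; $\tau_{k,\mathrm{trial}}=\infty$ if $D_k\le0$, else $\tau_{k,\mathrm{trial}}=(1-\sigma_c)(\|c_k\|_2-\|c_k+J_kv_k\|_2)/D_k$. Set $\tau_k=\tau_{k-1}$ if $\tau_{k-1}\le\tau_{k,\mathrm{trial}}$, else $\tau_k=\min\{(1-\epsilon_\tau)\tau_{k-1},\tau_{k,\mathrm{trial}}\}$. 4. With $\Delta q_k(s,\tau):=-\tau(g_k^Ts+\tfrac1{2\alpha_k}\|s\|_2^2+r(x_k+s)-r_k)+\|c_k\|_2-\|c_k+J_ks\|_2$: if $\Phi_{\tau_k}(x_k+s_k)\le\Phi_{\tau_k}(x_k)-\eta\Delta q_k(s_k,\tau_k)$ set $x_{k+1}=x_k+s_k$, $\alpha_{k+1}=\alpha_k$; else $x_{k+1}=x_k$, $\alpha_{k+1}=\xi\alpha_k$. Standing assumption: there is an open convex set $\mathcal X$ containing all iterates $x_k$ and trial points $x_k+s_k$ such that $f$ is bounded below on $\mathcal X$, $\|\nabla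 f(x)\|_2\le\kappa_{\nabla f}$ for $x\in\mathcal X$ and $\nabla f$ is Lipschitz on $\mathcal X$, $c$ and $J$ are bounded on $\mathcal X$ and $J$ is Lipschitz on $\mathcal X$, and every subgradient $w\in\partial r(x)$ with $x\in\mathcal X$ satisfies $\|w\|_2\le\kappa_{\partial r}$ (constants $\kappa_{\nabla f},\kappa_{\partial r}>0$). *)

From HB Require Import structures.
From mathcomp Require Import all_boot all_order all_algebra.
From mathcomp Require Import reals.
Set Implicit Arguments. Unset Strict Implicit. Unset Printing Implicit Defensive.
Import Order.TTheory GRing.Theory Num.Theory.
Local Open Scope ring_scope.

Section Defs.
Variable R : realType.

Definition dotv {n : nat} (u v : 'cV[R]_n) : R := \sum_(i < n) u i 0 * v i 0.
Definition norm2 {n : nat} (v : 'cV[R]_n) : R := Num.sqrt (dotv v v).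
Definition frob {m n : nat} (A : 'M[R]_(m, n)) : R :=
  Num.sqrt (\sum_(i < m) \sum_(j < n) A i j ^+ 2).

Definition has_gradient {n : nat} (f : 'cV[R]_n -> R) (g : 'cV[R]_n -> 'cV[R]_n) :=
  forall x, forall eps, 0 < eps -> exists2 delta, 0 < delta &
    forall y, norm2 (y - x) < delta ->
      `|f y - f x - dotv (g x) (y - x)| <= eps * norm2 (y - x).

Definition has_jacobian {n m : nat} (c : 'cV[R]_n -> 'cV[R]_m)
    (J : 'cV[R]_n -> 'M[R]_(m, n)) :=
  forall x, forall eps, 0 < eps -> exists2 delta, 0 < delta &
    forall y, norm2 (y - x) < delta ->
      norm2 (c y - c x - J x *m (y - x)) <= eps * norm2 (y - x).

Definition continuous_vec {n p : nat} (h : 'cV[R]_n -> 'cV[R]_p) :=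
  forall x, forall eps, 0 < eps -> exists2 delta, 0 < delta &
    forall y, norm2 (y - x) < delta -> norm2 (h y - h x) < eps.

Definition continuous_mat {n m p : nat} (h : 'cV[R]_n -> 'M[R]_(m, p)) :=
  forall x, forall eps, 0 < eps -> exists2 delta, 0 < delta &
    forall y, norm2 (y - x) < delta -> frob (h y - h x) < eps.

Definition convex_fun {n : nat} (r : 'cV[R]_n -> R) :=
  forall x y (t : R), 0 <= t -> t <= 1 ->
    r ((1 - t) *: x + t *: y) <= (1 - t) * r x + t * r y.

Definition subgrad {n : nat} (r : 'cV[R]_n -> R) (x w : 'cV[R]_n) :=
  forall y, r x + dotv w (y - x) <= r y.

Definition open_set {n : nat} (X : 'cV[R]_n -> Prop) :=
  forall x, X x -> exists2 e, 0 < e & forall y, norm2 (y - x) < e -> X y.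

Definition convex_set {n : nat} (X : 'cV[R]_n -> Prop) :=
  forall x y (t : R), X x -> X y -> 0 <= t -> t <= 1 -> X ((1 - t) *: x + t *: y).

Definition merit {n m : nat} (f r : 'cV[R]_n -> R) (c : 'cV[R]_n -> 'cV[R]_m)
  (tau : R) (x : 'cV[R]_n) : R := tau * (f x + r x) + norm2 (c x).

Definition dq {n m : nat} (g : 'cV[R]_n -> 'cV[R]_n) (r : 'cV[R]_n -> R)
  (c : 'cV[R]_n -> 'cV[R]_m) (J : 'cV[R]_n -> 'M[R]_(m, n))
  (xk : 'cV[R]_n) (alpha : R) (s : 'cV[R]_n) (tau : R) : R :=
  - tau * (dotv (g xk) s + (2 * alpha)^-1 * norm2 s ^+ 2 + r (xk + s) - r xk)
  + norm2 (c xk) - norm2 (c xk + J xk *m s).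

Definition Dk {n : nat} (g : 'cV[R]_n -> 'cV[R]_n) (r : 'cV[R]_n -> R)
  (sbar : R) (xk : 'cV[R]_n) (alpha : R) (s : 'cV[R]_n) : R :=
  dotv (g xk) s + sbar * norm2 s ^+ 2 / alpha + r (xk + s) - r xk.

(* A non-terminating run of the algorithm: sequences x_k, alpha_k, tau_k
   (tau_{-1} = taum1), v_k, u_k satisfying Steps 1-4 for every k, with
   neither termination test firing. *)
Definition nonterminating_run {n m : nat}
  (f : 'cV[R]_n -> R) (g : 'cV[R]_n -> 'cV[R]_n) (r : 'cV[R]_n -> R)
  (c : 'cV[R]_n -> 'cV[R]_m) (J : 'cV[R]_n -> 'M[R]_(m, n))
  (kappa_v sigma_c eps_tau xi eta sigma_u taum1 : R)
  (x : nat -> 'cV[R]_n) (alpha tau : nat -> R) (v u : nat -> 'cV[R]_n) : Prop :=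
  let sbar := sigma_u + 2^-1 in
  forall k : nat,
    let xk := x k in let ak := alpha k in
    let gk := g xk in let ck := c xk in let Jk := J xk in
    let sk := v k + u k in
    (if (Jk^T *m ck != 0) then
       (exists y : 'cV[R]_m, v k = Jk^T *m y) /\
       norm2 (v k) <= kappa_v * ak * norm2 (Jk^T *m ck) /\
       (exists beta_c : R,
          [/\ 0 <= beta_c, beta_c <= kappa_v * ak,
              (forall beta : R, 0 <= beta -> beta <= kappa_v * ak ->
                 2^-1 * norm2 (ck - beta *: (Jk *m Jk^T *m ck)) ^+ 2
                 >= 2^-1 * norm2 (ck - beta_c *: (Jk *m Jk^T *m ck)) ^+ 2) &
              norm2 (ck + Jk *m v k)
                <= norm2 (ck + Jk *m (- beta_c *: (Jk^T *m ck)))])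
     else v k = 0 /\ ck = 0 (* ck <> 0 would terminate *)) /\
    (Jk *m u k = 0 /\
     forall w : 'cV[R]_n, Jk *m w = 0 ->
       dotv gk (u k) + (2 * ak)^-1 * norm2 (u k) ^+ 2 + r (xk + v k + u k)
       <= dotv gk w + (2 * ak)^-1 * norm2 w ^+ 2 + r (xk + v k + w)) /\
    sk <> 0 (* s_k = 0 would terminate *) /\
    (let D := Dk g r sbar xk ak sk in
     let tprev := if k is k'.+1 then tau k' else taum1 in
     if D <= 0 then tau k = tprev
     else let trial := (1 - sigma_c) * (norm2 ck - norm2 (ck + Jk *m v k)) / D in
          tau k = (if tprev <= trial then tprev
                   else Num.min ((1 - eps_tau) * tprev) trial)) /\
    (if merit f r c (tau k) (xk + sk)
        <= merit f r c (tau k) xk - eta * dq g r c J xk ak sk (tau k)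
     then x k.+1 = xk + sk /\ alpha k.+1 = ak
     else x k.+1 = xk /\ alpha k.+1 = xi * ak).

End Defs.

(* Since v_k lies in Range(J_k^T) and u_k in Null(J_k), they are orthogonal, so
   ||s_k||^2 = ||v_k||^2 + ||u_k||^2; with sbar <= 1 and g_k^T v_k <= kappa_gf ||v_k||
   it remains to bound g_k^T u_k + ||u_k||^2/alpha_k + r(x_k + s_k) - r_k by
   kappa_dr ||v_k||.  For t in (0, 1] the shrunk step (1 - t) u_k is feasible for the
   subproblem, so u_k does at least as well; the value of r at x_k + v_k + (1 - t) u_k
   is controlled by convexity along [x_k, x_k + s_k] and by a subgradient there, which
   is bounded by kappa_dr for small t because X is open.  This gives the bound up to an
   O(t) term, and t -> 0 concludes.
   Subgradients of a finite convex function on R^n exist by a finite-dimensional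
   Hahn-Banach argument: a subgradient relative to the slice through y on which only
   the first i coordinates vary extends to coordinate i by choosing a slope between
   all backward and forward difference quotients along e_i. *)

From HB Require Import structures.
From mathcomp Require Import all_boot all_order all_algebra.
From mathcomp Require Import reals classical_sets.
From mathcomp Require Import ring lra.
Set Implicit Arguments. Unset Strict Implicit. Unset Printing Implicit Defensive.
Import Order.TTheory GRing.Theory Num.Theory.
Local Open Scope ring_scope.

Section EuclideanSpace.
Variables (R : realType) (n : nat).
Implicit Types a b d : 'cV[R]_n.

Lemma dotvDl a b d : dotv (a + b) d = dotv a d + dotv b d.
Proof. by rewrite /dotv -big_split; apply: eq_bigr => i _; rewrite !mxE mulrDl. Qed.

Lemma dotvZl (k : R) a d : dotv (k *: a) d = k * dotv a d.
Proof. by rewrite /dotv mulr_sumr; apply: eq_bigr => i _; rewrite !mxE mulrA. Qed.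

Lemma dotvC a b : dotv a b = dotv b a.
Proof. by rewrite /dotv; apply: eq_bigr => i _; rewrite mulrC. Qed.

Lemma dotvDr a b d : dotv d (a + b) = dotv d a + dotv d b.
Proof. by rewrite !(dotvC d) dotvDl. Qed.

Lemma dotvZr (k : R) a d : dotv d (k *: a) = k * dotv d a.
Proof. by rewrite !(dotvC d) dotvZl. Qed.

Lemma dotvNr a d : dotv d (- a) = - dotv d a.
Proof. by rewrite -scaleN1r dotvZr mulN1r. Qed.

Lemma dotvBr a b d : dotv d (a - b) = dotv d a - dotv d b.
Proof. by rewrite dotvDr dotvNr. Qed.

Lemma dotvBl a b d : dotv (a - b) d = dotv a d - dotv b d.
Proof. by rewrite !(dotvC _ d) dotvBr. Qed.

Lemma dotv0l a : dotv 0 a = 0.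
Proof. by rewrite /dotv big1 // => i _; rewrite mxE mul0r. Qed.

Lemma dotv_ge0 a : 0 <= dotv a a.
Proof. by apply: sumr_ge0 => i _; rewrite -expr2 sqr_ge0. Qed.

Lemma norm2_ge0 a : 0 <= norm2 a.
Proof. exact: sqrtr_ge0. Qed.

Lemma sqr_norm2 a : norm2 a ^+ 2 = dotv a a.
Proof. by rewrite sqr_sqrtr // dotv_ge0. Qed.

Lemma norm2Z (k : R) a : norm2 (k *: a) = `|k| * norm2 a.
Proof. by rewrite /norm2 dotvZl dotvZr mulrA -expr2 sqrtrM ?sqr_ge0 // sqrtr_sqr. Qed.

Lemma dotv_delta a (i : 'I_n) : dotv a (delta_mx i 0) = a i 0.
Proof.
rewrite /dotv (bigD1 i) //= big1 ?addr0; first by rewrite mxE !eqxx mulr1.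
by move=> j /negbTE ji; rewrite mxE ji mulr0.
Qed.

Lemma dotvE a b : dotv a b = (a^T *m b) 0 0.
Proof. by rewrite mxE; apply: eq_bigr => i _; rewrite mxE. Qed.

Lemma dotv_trmx_ker m (A : 'M[R]_(m, n)) (y : 'cV[R]_m) b :
  A *m b = 0 -> dotv (A^T *m y) b = 0.
Proof. by move=> Ab0; rewrite dotvE trmx_mul trmxK -mulmxA Ab0 mulmx0 mxE. Qed.

Lemma sqr_norm2D_orth a b :
  dotv a b = 0 -> norm2 (a + b) ^+ 2 = norm2 a ^+ 2 + norm2 b ^+ 2.
Proof.
by move=> ab0; rewrite !sqr_norm2 dotvDl !dotvDr (dotvC b) ab0 addr0 add0r.
Qed.

Lemma dotv_le_norm2 a b : dotv a b <= norm2 a * norm2 b.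
Proof.
pose p : {poly R} := Poly [:: dotv b b; - (2 * dotv a b); dotv a a].
have p_ge0 l : 0 <= p.[l].
  have -> : p.[l] = dotv (l *: a - b) (l *: a - b).
    rewrite /p horner_Poly /= mul0r add0r !dotvBl !dotvBr !dotvZl !dotvZr (dotvC b a).
    ring.
  exact: dotv_ge0.
have p2_ge0 : 0 <= p`_2 by rewrite coef_Poly dotv_ge0.
have := deg_le2_poly_delta_ge0 (size_Poly _ : (size p <= 3)%N) p2_ge0 p_ge0.
rewrite !coef_Poly /= subr_le0 => disc.
have {disc} disc : dotv a b ^+ 2 <= dotv a a * dotv b b by lra.
rewrite (le_trans (ler_norm _)) // -sqrtr_sqr -sqrtrM ?dotv_ge0 //.
exact: ler_wsqrtr.
Qed.

End EuclideanSpace.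

Local Open Scope classical_set_scope.

Lemma sup_between (R : realType) (L U : set R) :
  L !=set0 -> U !=set0 -> (forall p q, L p -> U q -> p <= q) ->
  exists c, ubound L c /\ lbound U c.
Proof.
move=> L0 [q Uq] LU; have supL : has_sup L by split=> //; exists q => p /LU; apply.
exists (sup L); split; first exact: sup_upper_bound.
by move=> q' Uq'; apply: ge_sup => // p /LU; apply.
Qed.

Definition coord_eq_from {R : realType} {n : nat} (k : nat) (y z : 'cV[R]_n) :=
  forall i : 'I_n, (k <= i)%N -> z i 0 = y i 0.

Definition subgrad_on {R : realType} {n : nat} (P : 'cV[R]_n -> Prop)
    (r : 'cV[R]_n -> R) (y w : 'cV[R]_n) :=
  forall z, P z -> r y + dotv w (z - y) <= r z.

Section SubgradientExistence.
Variables (R : realType) (n : nat) (r : 'cV[R]_n -> R) (y : 'cV[R]_n).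
Hypothesis r_convex : convex_fun r.

Lemma coord_eq_from_comb k a b (mu : R) :
  coord_eq_from k y a -> coord_eq_from k y b ->
  coord_eq_from k y ((1 - mu) *: a + mu *: b).
Proof. by move=> ya yb i ki; rewrite !mxE ya // yb //; ring. Qed.

Section CoordinateExtension.
Variables (i : 'I_n) (w : 'cV[R]_n).
Hypothesis w_subgrad : subgrad_on (coord_eq_from i y) r y w.

Let e : 'cV[R]_n := delta_mx i 0.
Let l z := r y + dotv w (z - y).

Lemma slope_sandwich x x' s t :
  coord_eq_from i y x -> coord_eq_from i y x' -> 0 < s -> 0 < t ->
  (l x' - r (x' - s *: e)) / s <= (r (x + t *: e) - l x) / t.
Proof.
move=> yx yx' s_gt0 t_gt0; set P := x' - s *: e; set Q := x + t *: e.
have st_gt0 : 0 < s + t by rewrite addr_gt0.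
pose mu := s / (s + t).
have mu1 : 1 - mu = t / (s + t) by rewrite /mu; field; rewrite gt_eqF.
(* the [e]-components of [P] and [Q] cancel in this combination *)
have comb : (1 - mu) *: P + mu *: Q = (1 - mu) *: x' + mu *: x.
  by apply/matrixP => j k; rewrite !mxE mu1 /mu; field; rewrite gt_eqF.
have l_comb : l ((1 - mu) *: x' + mu *: x) = (1 - mu) * l x' + mu * l x.
  by rewrite /l !dotvBr !dotvDr !dotvZr; ring.
have mu_ge0 : 0 <= mu by rewrite divr_ge0 ?ltW.
have mu_le1 : mu <= 1 by rewrite -subr_ge0 mu1 divr_ge0 ?ltW.
have r_comb := r_convex P Q mu_ge0 mu_le1; rewrite comb in r_comb.
have l_le := w_subgrad (coord_eq_from_comb mu yx' yx).
have : t / (s + t) * (l x' - r P) <= s / (s + t) * (r Q - l x).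
  move: l_le; rewrite -/(l _) l_comb -mu1 -/mu; lra.
rewrite ![_ / (s + t) * _]mulrAC ler_pM2r ?invr_gt0 // => ineq.
by rewrite ler_pdivrMr // mulrAC ler_pdivlMr //; lra.
Qed.

Lemma subgrad_on_coord_succ : exists w', subgrad_on (coord_eq_from i.+1 y) r y w'.
Proof.
pose L := [set q | exists x s, [/\ coord_eq_from i y x, 0 < s &
  q = (l x - r (x - s *: e)) / s]].
pose U := [set q | exists x t, [/\ coord_eq_from i y x, 0 < t &
  q = (r (x + t *: e) - l x) / t]].
have [a [La Ua]] : exists a, ubound L a /\ lbound U a.
  apply: sup_between.
  - by exists ((l y - r (y - 1 *: e)) / 1), y, 1.
  - by exists ((r (y + 1 *: e) - l y) / 1), y, 1.
  - by move=> _ _ [x' [s [yx' s0 ->]]] [x [t [yx t0 ->]]]; apply: slope_sandwich.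
exists (w + (a - w i 0) *: e) => z yz.
pose t := z i 0 - y i 0; pose x := z - t *: e.
have yx : coord_eq_from i y x.
  move=> j ij; rewrite /x !mxE; have [->|ji] := eqVneq j i.
    by rewrite !eqxx mulr1 /t opprB addrC subrK.
  by rewrite mulr0 subr0 yz // ltn_neqAle ij andbT; apply: contra ji => /eqP/val_inj ->.
have zx : z = x + t *: e by rewrite subrK.
have -> : r y + dotv (w + (a - w i 0) *: e) (z - y) = l x + t * a.
  have ee : dotv e e = 1 by rewrite dotv_delta mxE !eqxx.
  have ex : dotv e (x - y) = 0.
    by move: (yx i (leqnn i)); rewrite dotvC dotv_delta !mxE => ->; rewrite subrr.
  have zy : z - y = (x - y) + t *: e by rewrite zx addrAC.
  by rewrite zy dotvDl dotvZl !(dotvDr (x - y)) !dotvZr ex ee dotv_delta /l; ring.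
have [t_gt0|t_lt0|t0] := ltrgt0P t.
- have /Ua : U ((r (x + t *: e) - l x) / t) by exists x, t.
  by rewrite ler_pdivlMr // -zx; lra.
- have Nt_gt0 : 0 < - t by rewrite oppr_gt0.
  have /La : L ((l x - r (x - (- t) *: e)) / (- t)) by exists x, (- t).
  by rewrite scaleNr opprK -zx ler_pdivrMr //; lra.
- by rewrite zx t0 scale0r addr0 mul0r addr0; apply: w_subgrad.
Qed.

End CoordinateExtension.

Lemma subgrad_exists : exists w, subgrad r y w.
Proof.
suff /(_ n (leqnn n)) [w w_subgrad] :
    forall k, (k <= n)%N -> exists w, subgrad_on (coord_eq_from k y) r y w.
  by exists w => z; apply: w_subgrad => i; rewrite leqNgt ltn_ord.
elim=> [_|k IH kn].
  exists 0 => z yz; have -> : z = y by apply/matrixP => i j; rewrite (ord1 j) yz.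
  by rewrite subrr dotv0l addr0.
have [w w_subgrad] := IH (ltnW kn).
exact: (subgrad_on_coord_succ (i := Ordinal kn) w_subgrad).
Qed.

End SubgradientExistence.

Local Close Scope classical_set_scope.

Lemma ler_of_vanishing_sub (R : realFieldType) (a b c e : R) :
  0 < e -> 0 <= b -> (forall t, 0 < t -> t <= e -> a - t * b <= c) -> a <= c.
Proof.
move=> e_gt0 b_ge0 small_t; apply/ler_addgt0Pr => eps eps_gt0.
have b1_gt0 : 0 < b + 1 by rewrite ltr_wpDl.
pose t := Num.min e (eps / (b + 1)).
have t_gt0 : 0 < t by rewrite lt_min e_gt0 divr_gt0.
have tb_le : t * b <= eps.
  apply: le_trans (_ : eps / (b + 1) * b <= eps).
    by apply: ler_wpM2r => //; rewrite ge_min lexx orbT.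
  by rewrite mulrAC ler_pdivrMr // mulrDr mulr1 lerDl ltW.
have t_le_e : t <= e by rewrite ge_min lexx.
by have := small_t t t_gt0 t_le_e; lra.
Qed.

Lemma open_set_ray (R : realType) n (X : 'cV[R]_n -> Prop) y d :
  open_set X -> X y -> exists2 e, 0 < e & forall t, 0 <= t -> t <= e -> X (y - t *: d).
Proof.
move=> X_open Xy; have [e e_gt0 ball_e] := X_open y Xy.
have d1_gt0 : 0 < norm2 d + 1 by rewrite ltr_wpDl ?norm2_ge0.
exists (e / (norm2 d + 1)) => [|t t_ge0 t_le]; first by rewrite divr_gt0.
apply: ball_e; rewrite addrAC subrr add0r -scaleNr norm2Z normrN ger0_norm //.
apply: le_lt_trans (_ : e / (norm2 d + 1) * norm2 d < e).
  by apply: ler_wpM2r; rewrite ?norm2_ge0.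
by rewrite mulrAC ltr_pdivrMr // mulrDr mulr1 ltrDl.
Qed.

Definition prox_model {R : realType} {n : nat} (g : 'cV[R]_n) (r : 'cV[R]_n -> R)
    (y : 'cV[R]_n) (alpha : R) (w : 'cV[R]_n) : R :=
  dotv g w + (2 * alpha)^-1 * norm2 w ^+ 2 + r (y + w).

Section ProximalStep.
Variables (R : realType) (n : nat) (r : 'cV[R]_n -> R) (g x v u : 'cV[R]_n).
Variables (alpha kappa : R).
Hypotheses (r_convex : convex_fun r) (alpha_gt0 : 0 < alpha).
Hypothesis u_min_shrink : forall t, 0 <= t -> t <= 1 ->
  prox_model g r (x + v) alpha u <= prox_model g r (x + v) alpha ((1 - t) *: u).

Lemma prox_step_shrink_bound t w :
  0 < t -> t <= 1 -> subgrad r (x + v + (1 - t) *: u) w -> norm2 w <= kappa ->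
  dotv g u + norm2 u ^+ 2 / alpha + r (x + (v + u)) - r x
    - t * (norm2 u ^+ 2 / (2 * alpha)) <= kappa * norm2 v.
Proof.
move=> t_gt0 t_le1 w_subgrad w_le; set p := x + v + (1 - t) *: u.
have r_p : r p <= (1 - t) * r (x + v + u) + t * r x + t * (kappa * norm2 v).
  have p_tv : (1 - t) *: (x + v + u) + t *: x = p - t *: v.
    by apply/matrixP => i j; rewrite !mxE; ring.
  have r_cvx := r_convex (x + v + u) x (ltW t_gt0) t_le1; rewrite p_tv in r_cvx.
  have := w_subgrad (p - t *: v); rewrite [p - _ - p]addrAC subrr add0r dotvNr dotvZr.
  have : t * dotv w v <= t * (kappa * norm2 v).
    rewrite ler_pM2l // (le_trans (dotv_le_norm2 w v)) //.
    by rewrite ler_wpM2r ?norm2_ge0.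
  lra.
have u_min := u_min_shrink (ltW t_gt0) t_le1.
rewrite /prox_model -/p dotvZr norm2Z ger0_norm ?subr_ge0 // in u_min.
rewrite [x + (v + u)]addrA -(ler_pM2l t_gt0).
have -> : norm2 u ^+ 2 / alpha = 2 * ((2 * alpha)^-1 * norm2 u ^+ 2).
  by field; rewrite gt_eqF.
rewrite [norm2 u ^+ 2 / _]mulrC; move: u_min r_p.
set q := (2 * alpha)^-1 * norm2 u ^+ 2.
have -> : (2 * alpha)^-1 * ((1 - t) * norm2 u) ^+ 2 = (1 - t) ^+ 2 * q.
  by rewrite /q; ring.
lra.
Qed.

Lemma prox_step_bound :
  (exists2 e, 0 < e & forall t, 0 < t -> t <= e ->
     exists2 w, subgrad r (x + v + (1 - t) *: u) w & norm2 w <= kappa) ->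
  dotv g u + norm2 u ^+ 2 / alpha + r (x + (v + u)) - r x <= kappa * norm2 v.
Proof.
case=> e e_gt0 bounded_subgrad.
apply: (@ler_of_vanishing_sub _ _ (norm2 u ^+ 2 / (2 * alpha)) _ (Num.min e 1)).
- by rewrite lt_min e_gt0 ltr01.
- by rewrite divr_ge0 ?sqr_ge0 ?mulr_ge0 ?ltW.
move=> t t_gt0; rewrite le_min => /andP[t_le_e t_le1].
have [w w_subgrad w_le] := bounded_subgrad t t_gt0 t_le_e.
exact: prox_step_shrink_bound w_subgrad w_le.
Qed.

End ProximalStep.

Section NonterminatingRun.
Variables (R : realType) (n m : nat).
Variables (f : 'cV[R]_n -> R) (g : 'cV[R]_n -> 'cV[R]_n) (r : 'cV[R]_n -> R).
Variables (c : 'cV[R]_n -> 'cV[R]_m) (J : 'cV[R]_n -> 'M[R]_(m, n)).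
Variables (kappa_v sigma_c eps_tau xi eta sigma_u taum1 : R).
Variables (x : nat -> 'cV[R]_n) (alpha tau : nat -> R) (v u : nat -> 'cV[R]_n).
Hypothesis run : nonterminating_run f g r c J kappa_v sigma_c eps_tau xi eta
  sigma_u taum1 x alpha tau v u.

Lemma run_alpha_gt0 : 0 < alpha 0 -> 0 < xi -> forall k, 0 < alpha k.
Proof.
move=> alpha0_gt0 xi_gt0; elim=> [//|k IHk].
have [_ [_ [_ [_ step4]]]] := run k.
by move: step4; case: ifP => _ [_ ->] //; rewrite mulr_gt0.
Qed.

Lemma run_dotv_normal_tangent k : dotv (v k) (u k) = 0.
Proof.
have [step1 [[Ju _] _]] := run k; move: step1; case: ifP => _ [].
  by move=> [y ->] _; apply: dotv_trmx_ker.
by move=> -> _; rewrite dotv0l.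
Qed.

Lemma run_prox_min_shrink k t : 0 <= t -> t <= 1 ->
  prox_model (g (x k)) r (x k + v k) (alpha k) (u k)
    <= prox_model (g (x k)) r (x k + v k) (alpha k) ((1 - t) *: u k).
Proof.
have [_ [[Ju u_min] _]] := run k => _ _.
by apply: u_min; rewrite -scalemxAr Ju scaler0.
Qed.

End NonterminatingRun.

Unset Implicit Arguments.

Theorem lemma3p7 (R : realType) (n m : nat) (Hmn : (m <= n)%N)
  (f : 'cV[R]_n -> R) (g : 'cV[R]_n -> 'cV[R]_n) (r : 'cV[R]_n -> R)
  (c : 'cV[R]_n -> 'cV[R]_m) (J : 'cV[R]_n -> 'M[R]_(m, n))
  (* problem data *)
  (Hg : has_gradient f g) (Hgc : continuous_vec g)
  (HJ : has_jacobian c J) (HJc : continuous_mat J)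
  (Hr0 : forall x, 0 <= r x) (Hrc : convex_fun r)
  (* algorithm constants and inputs *)
  (kappa_v sigma_c eps_tau xi eta sigma_u alpha0 taum1 : R)
  (Hkv : 0 < kappa_v)
  (Hsc : 0 < sigma_c < 1) (Het : 0 < eps_tau < 1) (Hxi : 0 < xi < 1)
  (Heta : 0 < eta < 1) (Hsu : 0 < sigma_u <= 2^-1)
  (Ha0 : 0 < alpha0) (Ht0 : 0 < taum1)
  (* iterates *)
  (x : nat -> 'cV[R]_n) (alpha tau : nat -> R) (v u : nat -> 'cV[R]_n)
  (Hal0 : alpha 0%N = alpha0)
  (Hrun : nonterminating_run f g r c J kappa_v sigma_c eps_tau xi eta sigma_u
            taum1 x alpha tau v u)
  (* standing assumption *)
  (X : 'cV[R]_n -> Prop) (kappa_gf kappa_dr : R)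
  (HXo : open_set X) (HXc : convex_set X)
  (HXx : forall k, X (x k)) (HXs : forall k, X (x k + (v k + u k)))
  (Hflow : exists lb, forall y, X y -> lb <= f y)
  (Hkgf : 0 < kappa_gf) (Hkdr : 0 < kappa_dr)
  (Hgb : forall y, X y -> norm2 (g y) <= kappa_gf)
  (HgL : exists L, forall y z, X y -> X z -> norm2 (g y - g z) <= L * norm2 (y - z))
  (Hcb : exists B, forall y, X y -> norm2 (c y) <= B)
  (HJb : exists B, forall y, X y -> frob (J y) <= B)
  (HJL : exists L, forall y z, X y -> X z -> frob (J y - J z) <= L * norm2 (y - z))
  (Hsub : forall y w, X y -> subgrad r y w -> norm2 w <= kappa_dr) :
  forall k : nat,
    Dk g r (sigma_u + 2^-1) (x k) (alpha k) (v k + u k)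
    <= (kappa_gf + kappa_dr) * norm2 (v k)
       + (sigma_u + 2^-1) * norm2 (v k) ^+ 2 / alpha k.
Proof.
move=> k; have alpha_gt0 : 0 < alpha k.
  by apply: (run_alpha_gt0 Hrun); [rewrite Hal0 | case/andP: Hxi].
have u_bound : dotv (g (x k)) (u k) + norm2 (u k) ^+ 2 / alpha k
    + r (x k + (v k + u k)) - r (x k) <= kappa_dr * norm2 (v k).
  apply: (prox_step_bound Hrc alpha_gt0 (run_prox_min_shrink Hrun k)).
  have [e e_gt0 X_ray] := open_set_ray (u k) HXo (HXs k).
  exists e => // t t_gt0 t_le_e.
  have [w w_subgrad] := subgrad_exists (x k + v k + (1 - t) *: u k) Hrc.
  exists w => //; apply: Hsub w_subgrad.
  have -> : x k + v k + (1 - t) *: u k = x k + (v k + u k) - t *: u k.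
    by apply/matrixP => i j; rewrite !mxE; ring.
  exact: X_ray (ltW t_gt0) t_le_e.
have gv_bound : dotv (g (x k)) (v k) <= kappa_gf * norm2 (v k).
  by rewrite (le_trans (dotv_le_norm2 _ _)) // ler_wpM2r ?norm2_ge0 ?Hgb.
have sbar_le1 : sigma_u + 2^-1 <= 1 by case/andP: Hsu => _; lra.
have sbar_ge0 : 0 <= sigma_u + 2^-1 by case/andP: Hsu => su_gt0 _; lra.
have u_sbar : (sigma_u + 2^-1) * (norm2 (u k) ^+ 2 / alpha k)
    <= norm2 (u k) ^+ 2 / alpha k.
  by rewrite ler_piMl // divr_ge0 ?sqr_ge0 ?ltW.
rewrite /Dk dotvDr sqr_norm2D_orth ?(run_dotv_normal_tangent Hrun) //.
rewrite mulrDr mulrDl -[_ * norm2 (u k) ^+ 2 / _]mulrA.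
lra.
Qed.
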